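(* Let $E_1,E_2,E_3,H_1,H_2,H_3$ be logically independent events with $H_i\ne\emptyset$, let $(x_1,x_2,x_3)\in[0,1]^3$, and let $$\mathcal M=(x_1,x_2,x_3,T_L(x_1,x_2),T_L(x_1,x_3),T_L(x_2,x_3),T_L(x_1,x_2,x_3))$$ be a prevision assessment on $\mathcal F=\{\mathscr C_1,\mathscr C_2,\mathscr C_3,\mathscr C_{12},\mathscr C_{13},\mathscr C_{23},\mathscr C_{123}\}$, where $T_L(x_i,x_j)=\max\{x_i+x_j-1,0\}$ and $T_L(x_1,x_2,x_3)=\max\{x_1+x_2+x_3-2,0\}$. (i) If $x_1+x_2+x_3-2\ge0$, then $\mathcal M$ is coherent. (ii) If $x_1+x_2-1>0$, $x_1+x_3-1>0$, $x_2+x_3-1>0$ and $x_1+x_2+x_3-2<0$, then $\mathcal M$ is not coherent.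
   Context: Events are identified with their indicators; $\bar E$ is the negation of $E$. For $H\ne\emptyset$ the conditional event $E|H$ is true if $EH$ is true, false if $\bar EH$ is true, void if $\bar H$ is true; with $P(E|H)=x$ it is identified with the random quantity $EH+x\bar H$, and a conditional random quantity $X|H$ with prevision $\mu$ with $XH+\mu\bar H$. Coherence (de Finetti): an assessment $(\mu_1,\dots,\mu_m)$ on $\{X_1|H_1,\dots,X_m|H_m\}$ is coherent iff for all real stakes $s_i$ the gain $G=\sum_is_iH_i(X_i-\mu_i)$, restricted to $H_1\vee\dots\vee H_m$, satisfies $\min G\le0\le\max G$. Logical independence: all conjunctions of the listed events or their negations are nonempty. Notation: $\mathscr C_i=E_i|H_i$, $\mathscr C_{ij}=(E_i|H_i)\wedge(E_j|H_j)$, $\mathscr C_{123}=(E_1|H_1)\wedge(E_2|H_2)\wedge(E_3|H_3)$, with previsions $x_i,x_{ij},x_{123}$ in the order of $\mathcal F$. Conjunction of two: $\mathscr C_{ij}$ equals $1$ if $E_iH_iE_jH_j$ true, $0$ if $\bar E_iH_i\vee\bar E_jH_j$ true, $x_i$ if $\bar H_iE_jH_j$ true, $x_j$ if $\bar H_jE_iH_i$ true, $x_{ij}$ if $\bar H_i\bar H_j$ true. $\mathscr C_{123}$ equals $1$ if $E_1H_1E_2H_2E_3H_3$ true; $0$ if $\bar E_1H_1\vee\bar E_2H_2\vee\bar E_3H_3$ true; $x_1$, $x_2$, $x_3$ if respectively $\bar H_1E_2H_2E_3H_3$, $\bar H_2E_1H_1E_3H_3$, $\bar H_3E_1H_1E_2H_2$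 true; $x_{12}$, $x_{13}$, $x_{23}$ if respectively $\bar H_1\bar H_2E_3H_3$, $\bar H_1\bar H_3E_2H_2$, $\bar H_2\bar H_3E_1H_1$ true; $x_{123}$ if $\bar H_1\bar H_2\bar H_3$ true. *)

From Stdlib Require Import Reals Bool.
Open Scope R_scope.

(* Events on a sample space Omega are identified with their indicators,
   represented as boolean predicates Omega -> bool. *)

Definition ind (b : bool) : R := if b then 1 else 0.

(* Conditional event E|H with P(E|H) = x, as the random quantity EH + x (not H). *)
Definition cond_ev {Omega : Type} (E H : Omega -> bool) (x : R) (w : Omega) : R :=
  if H w then ind (E w) else x.

(* Conjunction (E_i|H_i) /\ (E_j|H_j), given previsions x_i, x_j, x_ij. *)
Definition conj2 {Omega : Type} (Ei Hi Ej Hj : Omega -> bool) (xi xj xij : R)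
  (w : Omega) : R :=
  if (Hi w && negb (Ei w)) || (Hj w && negb (Ej w)) then 0
  else if Hi w && Hj w then 1
  else if negb (Hi w) && Hj w then xi
  else if Hi w && negb (Hj w) then xj
  else xij.

Definition conj3 {Omega : Type} (E1 H1 E2 H2 E3 H3 : Omega -> bool)
  (x1 x2 x3 x12 x13 x23 x123 : R) (w : Omega) : R :=
  if (H1 w && negb (E1 w)) || (H2 w && negb (E2 w)) || (H3 w && negb (E3 w)) then 0
  else match H1 w, H2 w, H3 w with
       | true,  true,  true  => 1
       | false, true,  true  => x1
       | true,  false, true  => x2
       | true,  true,  false => x3
       | false, false, true  => x12
       | false, true,  false => x13
       | true,  false, false => x23
       | false, false, false => x123
       end.

Definition logically_independent6 {Omega : Type} (E1 E2 E3 H1 H2 H3 : Omega -> bool) : Prop :=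
  forall b1 b2 b3 c1 c2 c3 : bool, exists w : Omega,
    E1 w = b1 /\ E2 w = b2 /\ E3 w = b3 /\ H1 w = c1 /\ H2 w = c2 /\ H3 w = c3.

(* For each stake vector, the gain G = sum_k s_k (Q_k - mu_k), where Q_k is the
   conditional random quantity (X_k|H_k = X_k H_k + mu_k not H_k, so that
   H_k (X_k - mu_k) = Q_k - mu_k), restricted to H1 \/ H2 \/ H3, must satisfy
   min G <= 0 <= max G.  Since G takes finitely many values (it depends only on
   the truth values of the six events), this is the existence of points of
   H1 \/ H2 \/ H3 where G <= 0 and where G >= 0. *)
Definition gain {Omega : Type} (E1 E2 E3 H1 H2 H3 : Omega -> bool)
  (x1 x2 x3 x12 x13 x23 x123 : R)
  (s1 s2 s3 s12 s13 s23 s123 : R) (w : Omega) : R :=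
    s1 * (cond_ev E1 H1 x1 w - x1)
  + s2 * (cond_ev E2 H2 x2 w - x2)
  + s3 * (cond_ev E3 H3 x3 w - x3)
  + s12 * (conj2 E1 H1 E2 H2 x1 x2 x12 w - x12)
  + s13 * (conj2 E1 H1 E3 H3 x1 x3 x13 w - x13)
  + s23 * (conj2 E2 H2 E3 H3 x2 x3 x23 w - x23)
  + s123 * (conj3 E1 H1 E2 H2 E3 H3 x1 x2 x3 x12 x13 x23 x123 w - x123).

Definition coherent7 {Omega : Type} (E1 E2 E3 H1 H2 H3 : Omega -> bool)
  (x1 x2 x3 x12 x13 x23 x123 : R) : Prop :=
  forall s1 s2 s3 s12 s13 s23 s123 : R,
    let G := gain E1 E2 E3 H1 H2 H3 x1 x2 x3 x12 x13 x23 x123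
                  s1 s2 s3 s12 s13 s23 s123 in
    (exists w, (H1 w || H2 w || H3 w) = true /\ G w <= 0) /\
    (exists w, (H1 w || H2 w || H3 w) = true /\ 0 <= G w).

Definition TL2 (a b : R) : R := Rmax (a + b - 1) 0.
Definition TL3 (a b c : R) : R := Rmax (a + b + c - 2) 0.

From Stdlib Require Import Reals Bool List Lra Classical.
Open Scope R_scope.

(* Both parts are instances of de Finetti's criterion.
   (i) Coherence: it suffices to exhibit a probability distribution on points
   of H1 \/ H2 \/ H3 under which every gain has mean zero, since a zero mean
   forces the gain to take a value <= 0 and a value >= 0.  When
   x1 + x2 + x3 >= 2 the distribution giving weight x1 + x2 + x3 - 2 to the
   atom E1H1E2H2E3H3 and weight 1 - x_i to the atom where only E_i fails
   (all H_j true) does the job; logical independence provides the atoms.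
   (ii) Incoherence: it suffices to exhibit stakes whose gain is strictly
   positive on every point of H1 \/ H2 \/ H3; the stakes
   (-1,-1,-1,1,1,1,-1) work, by a finite case analysis on the truth values. *)

Definition wsum {A : Type} (l : list (R * A)) (f : A -> R) : R :=
  fold_right (fun p acc => fst p * f (snd p) + acc) 0 l.

Lemma wsum_pos {A : Type} (l : list (R * A)) (f : A -> R) :
  (forall p, In p l -> 0 <= fst p) ->
  (forall p, In p l -> 0 < f (snd p)) ->
  0 <= wsum l f /\ (0 < wsum l (fun _ => 1) -> 0 < wsum l f).
Proof.
  induction l as [|[a w] l IH]; simpl; intros Hweight Hval.
  - split; lra.
  - assert (Ha : 0 <= a) by (apply (Hweight (a, w)); left; reflexivity).
    assert (Hw : 0 < f w) by (apply (Hval (a, w)); left; reflexivity).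
    destruct IH as [IH0 IH1].
    + intros p Hp; apply Hweight; right; exact Hp.
    + intros p Hp; apply Hval; right; exact Hp.
    + assert (0 <= a * f w) by (apply Rmult_le_pos; lra).
      split; [lra|].
      intros Htot. destruct (Rle_lt_or_eq_dec 0 a Ha) as [Hpos | <-].
      * assert (0 < a * f w) by (apply Rmult_lt_0_compat; lra). lra.
      * specialize (IH1 ltac:(lra)). lra.
Qed.

Lemma wsum_opp {A : Type} (l : list (R * A)) (f : A -> R) :
  wsum l (fun w => - f w) = - wsum l f.
Proof. induction l as [|p l IH]; simpl; [ring | rewrite IH; ring]. Qed.

Lemma zero_mean_changes_sign {A : Type} (l : list (R * A)) (f : A -> R) :
  (forall p, In p l -> 0 <= fst p) ->
  wsum l (fun _ => 1) = 1 -> wsum l f = 0 ->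
  (exists p, In p l /\ f (snd p) <= 0) /\ (exists p, In p l /\ 0 <= f (snd p)).
Proof.
  intros Hweight Htot Hmean.
  assert (Hsign : forall g : A -> R, wsum l g = 0 ->
            exists p, In p l /\ g (snd p) <= 0).
  { intros g Hg. apply NNPP. intros Hnone.
    assert (Hgpos : forall p, In p l -> 0 < g (snd p)).
    { intros p Hp. apply Rnot_le_lt. intros Hle. apply Hnone. exists p. auto. }
    destruct (wsum_pos l g Hweight Hgpos) as [_ Hpos]. specialize (Hpos ltac:(lra)).
    lra. }
  split.
  - exact (Hsign f Hmean).
  - destruct (Hsign (fun w => - f w)) as [p [Hp Hle]].
    + rewrite wsum_opp, Hmean. ring.
    + exists p. split; [exact Hp | simpl in Hle; lra].
Qed.

Section Criteria.

Variable Omega : Type.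
Variables E1 E2 E3 H1 H2 H3 : Omega -> bool.
Variables x1 x2 x3 x12 x13 x23 x123 : R.

Let conditioning (w : Omega) : bool := H1 w || H2 w || H3 w.
Let G := gain E1 E2 E3 H1 H2 H3 x1 x2 x3 x12 x13 x23 x123.

Lemma coherent_of_fair_distribution (l : list (R * Omega)) :
  (forall p, In p l -> 0 <= fst p /\ conditioning (snd p) = true) ->
  wsum l (fun _ => 1) = 1 ->
  (forall s1 s2 s3 s12 s13 s23 s123,
     wsum l (G s1 s2 s3 s12 s13 s23 s123) = 0) ->
  coherent7 E1 E2 E3 H1 H2 H3 x1 x2 x3 x12 x13 x23 x123.
Proof.
  intros Hpts Htot Hfair s1 s2 s3 s12 s13 s23 s123.
  destruct (zero_mean_changes_sign l (G s1 s2 s3 s12 s13 s23 s123))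
    as [[p [Hp Hle]] [q [Hq Hge]]].
  - intros p Hp; apply (Hpts p Hp).
  - exact Htot.
  - apply Hfair.
  - split.
    + exists (snd p). split; [apply (Hpts p Hp) | exact Hle].
    + exists (snd q). split; [apply (Hpts q Hq) | exact Hge].
Qed.

Lemma incoherent_of_sure_win s1 s2 s3 s12 s13 s23 s123 :
  (forall w, conditioning w = true -> 0 < G s1 s2 s3 s12 s13 s23 s123 w) ->
  ~ coherent7 E1 E2 E3 H1 H2 H3 x1 x2 x3 x12 x13 x23 x123.
Proof.
  intros Hwin Hcoh.
  destruct (Hcoh s1 s2 s3 s12 s13 s23 s123) as [[w [Hw Hle]] _].
  specialize (Hwin w Hw). unfold G in Hwin. lra.
Qed.

End Criteria.

Lemma TL2_active (a b : R) : a + b - 1 >= 0 -> TL2 a b = a + b - 1.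
Proof. intros H. unfold TL2. apply Rmax_left. lra. Qed.

Lemma TL3_active (a b c : R) : a + b + c - 2 >= 0 -> TL3 a b c = a + b + c - 2.
Proof. intros H. unfold TL3. apply Rmax_left. lra. Qed.

Lemma TL3_inactive (a b c : R) : a + b + c - 2 < 0 -> TL3 a b c = 0.
Proof. intros H. unfold TL3. apply Rmax_right. lra. Qed.

Lemma Lukasiewicz_sure_win (Omega : Type) (E1 E2 E3 H1 H2 H3 : Omega -> bool)
  (x1 x2 x3 : R) (w : Omega) :
  0 <= x1 <= 1 -> 0 <= x2 <= 1 -> 0 <= x3 <= 1 -> x1 + x2 + x3 - 2 < 0 ->
  (H1 w || H2 w || H3 w) = true ->
  0 < gain E1 E2 E3 H1 H2 H3 x1 x2 x3
        (x1 + x2 - 1) (x1 + x3 - 1) (x2 + x3 - 1) 0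
        (-1) (-1) (-1) 1 1 1 (-1) w.
Proof.
  intros B1 B2 B3 Hsum.
  unfold gain, cond_ev, conj2, conj3, ind.
  destruct (E1 w), (E2 w), (E3 w), (H1 w), (H2 w), (H3 w); simpl; intros; lra.
Qed.

Theorem theorem24 (Omega : Type) (E1 E2 E3 H1 H2 H3 : Omega -> bool)
  (x1 x2 x3 : R) :
  logically_independent6 E1 E2 E3 H1 H2 H3 ->
  (exists w, H1 w = true) -> (exists w, H2 w = true) -> (exists w, H3 w = true) ->
  0 <= x1 <= 1 -> 0 <= x2 <= 1 -> 0 <= x3 <= 1 ->
  (x1 + x2 + x3 - 2 >= 0 ->
     coherent7 E1 E2 E3 H1 H2 H3 x1 x2 x3
       (TL2 x1 x2) (TL2 x1 x3) (TL2 x2 x3) (TL3 x1 x2 x3)) /\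
  (x1 + x2 - 1 > 0 -> x1 + x3 - 1 > 0 -> x2 + x3 - 1 > 0 -> x1 + x2 + x3 - 2 < 0 ->
     ~ coherent7 E1 E2 E3 H1 H2 H3 x1 x2 x3
       (TL2 x1 x2) (TL2 x1 x3) (TL2 x2 x3) (TL3 x1 x2 x3)).
Proof.
  intros LI _ _ _ B1 B2 B3. split.
  - intros Hs.
    rewrite !TL2_active, TL3_active by lra.
    destruct (LI true true true true true true) as (w0 & a1 & a2 & a3 & a4 & a5 & a6).
    destruct (LI false true true true true true) as (w1 & b1 & b2 & b3 & b4 & b5 & b6).
    destruct (LI true false true true true true) as (w2 & c1 & c2 & c3 & c4 & c5 & c6).
    destruct (LI true true false true true true) as (w3 & d1 & d2 & d3 & d4 & d5 & d6).
    apply coherent_of_fair_distribution with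
      (l := (x1 + x2 + x3 - 2, w0) :: (1 - x1, w1) :: (1 - x2, w2) :: (1 - x3, w3) :: nil).
    + intros p Hp. simpl in Hp.
      destruct Hp as [<- | [<- | [<- | [<- | []]]]]; simpl;
        rewrite ?a4, ?b4, ?c4, ?d4; split; first [lra | reflexivity].
    + simpl. ring.
    + intros. unfold wsum, gain, cond_ev, conj2, conj3, ind. simpl.
      rewrite a1, a2, a3, a4, a5, a6, b1, b2, b3, b4, b5, b6,
              c1, c2, c3, c4, c5, c6, d1, d2, d3, d4, d5, d6.
      simpl. ring.
  - intros P12 P13 P23 Ps.
    rewrite !TL2_active, TL3_inactive by lra.
    apply (incoherent_of_sure_win _ _ _ _ _ _ _ _ _ _ _ _ _ _
             (-1) (-1) (-1) 1 1 1 (-1)).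
    intros w Hw. apply Lukasiewicz_sure_win; assumption.
Qed.
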